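(* Let $d\ge1$ and let $\Phi$ be a Young function with $p_\Phi<\infty$. Let $r_0=\lim_{t\to0^+}r_\Phi(t)$ and $r_\infty=\lim_{t\to\infty}r_\Phi(t)$ (which exist), and suppose $r_0,r_\infty>1$. Then $$L^p(\mathbb R^d)\cap L^q(\mathbb R^d)\subseteq L^\Phi(\mathbb R^d)\subseteq L^p(\mathbb R^d)+L^q(\mathbb R^d)$$ for every $p>\max\{r_0,r_\infty\}$ and every $1<q<\min\{r_0,r_\infty\}$.
   Context: A Young function is a convex function $\Phi:[0,\infty)\to[0,\infty)$ with $\Phi(0)=0$, $\Phi(t)>0$ for $t>0$, and $\lim_{t\to\infty}\Phi(t)=\infty$. $\Phi'$ denotes the right derivative of $\Phi$. The Lebesgue exponents of $\Phi$ are $p_\Phi=\sup_{t>0}\frac{t\Phi'(t)}{\Phi(t)}$ and $q_\Phi=\inf_{t>0}\frac{t\Phi'(t)}{\Phi(t)}$. For a Young function $\Phi$, $r_\Phi(t)=\frac{\ln(\Phi(t)/\Phi(1))}{\ln t}$ for $t>0$, $t\ne1$. For a measurable $f$ on $\mathbb R^d$, $\rho_\Phi(f)=\int_{\mathbb R^d}\Phi(|f(x)|)\,dx$, the Luxemburg norm is $\|f\|_{L^\Phi}=\inf\{\lambda>0:\rho_\Phi(f/\lambda)\le1\}$, and the Orlicz space $L^\Phi(\mathbb R^d)$ consists of (classes of) measurable $f$ with $\|f\|_{L^\Phi}<\infty$. $L^p+L^q$ is the set of sums $g+h$ with $g\in L^p$, $h\in L^q$. *)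

From HB Require Import structures.
From mathcomp Require Import all_boot all_order all_algebra.
From mathcomp Require Import all_classical all_reals all_analysis.
Set Implicit Arguments. Unset Strict Implicit. Unset Printing Implicit Defensive.
Import Order.TTheory GRing.Theory Num.Theory.
Import numFieldNormedType.Exports.
Local Open Scope classical_set_scope.
Local Open Scope ring_scope.

(** Young functions (only values on [0,+oo) matter) *)
Definition young_function (R : realType) (Phi : R -> R) : Prop :=
  [/\ (forall x y t : R, 0 <= x -> 0 <= y -> 0 <= t -> t <= 1 ->
         Phi ((1 - t) * x + t * y) <= (1 - t) * Phi x + t * Phi y),
      Phi 0 = 0,
      (forall t : R, 0 < t -> 0 < Phi t) &
      Phi t @[t --> +oo] --> +oo].

Definition rderiv (R : realType) (Phi : R -> R) (t : R) : R :=
  lim ((Phi (t + h) - Phi t) / h @[h --> 0^'+]).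

Definition p_exp (R : realType) (Phi : R -> R) : \bar R :=
  ereal_sup [set (t * rderiv Phi t / Phi t)%:E | t in `]0, +oo[].

Definition r_fun (R : realType) (Phi : R -> R) (t : R) : R :=
  ln (Phi t / Phi 1) / ln t.

(** Lebesgue (outer) measure on R^d = d.-tuple R, via countable covers by
    half-open boxes prod_i [a_i, b_i) *)
Definition box (R : realType) (d : nat) (a b : d.-tuple R) : set (d.-tuple R) :=
  [set x | forall i : 'I_d, tnth a i <= tnth x i < tnth b i].

Definition box_vol (R : realType) (d : nat) (a b : d.-tuple R) : R :=
  \prod_(i < d) Num.max (tnth b i - tnth a i) 0.

Definition lebesgue_d (R : realType) (d : nat) (A : set (d.-tuple R)) : \bar R :=
  ereal_inf [set (\sum_(k <oo) (box_vol (ab k).1 (ab k).2)%:E)%E |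
    ab in [set ab : nat -> d.-tuple R * d.-tuple R |
             A `<=` \bigcup_k box (ab k).1 (ab k).2]].

Definition Lp (R : realType) (d : nat) (p : R) : set (d.-tuple R -> R) :=
  [set f : d.-tuple R -> R | measurable_fun setT f /\
     (\int[@lebesgue_d R d]_x (`|f x| `^ p)%:E < +oo)%E].

Definition modular (R : realType) (d : nat) (Phi : R -> R) (f : d.-tuple R -> R)
  : \bar R := (\int[@lebesgue_d R d]_x (Phi `|f x|)%:E)%E.

Definition luxemburg (R : realType) (d : nat) (Phi : R -> R) (f : d.-tuple R -> R)
  : \bar R :=
  ereal_inf [set lam%:E | lam in
    [set lam : R | 0 < lam /\ (modular Phi (fun x => (f x / lam)%R) <= 1)%E]].

Definition Orlicz (R : realType) (d : nat) (Phi : R -> R) : set (d.-tuple R -> R) :=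
  [set f : d.-tuple R -> R | measurable_fun setT f /\ (luxemburg Phi f < +oo)%E].

Definition fun_sum_set (T : Type) (R : realType) (A B : set (T -> R)) : set (T -> R) :=
  [set f | exists g h, A g /\ B h /\ f = (fun x => g x + h x)].

From HB Require Import structures.
From mathcomp Require Import all_boot all_order all_algebra.
From mathcomp Require Import all_classical all_reals all_analysis.
Import Order.TTheory GRing.Theory Num.Theory.
Import numFieldNormedType.Exports.
Local Open Scope classical_set_scope.
Local Open Scope ring_scope.

(* Since r_fun Phi t = ln (Phi t / Phi 1) / ln t, i.e. Phi t = Phi 1 t^(r_fun Phi t),
   the limits r0 and rinf give constants with Phi t <= K t^p for t >= 1 and
   Phi t <= K t^q for t <= 1 (as rinf < p and q < r0), and conversely
   t^p <= c Phi t for t <= 1 and t^q <= c Phi t for t >= 1 (as r0 < p and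
   q < rinf). Splitting at the level |f| = lam, the first pair of bounds
   controls the modular of f / lam by the L^p and L^q integrals of f, which is
   <= 1 for lam large; the second pair shows that f 1_{|f| <= lam} is in L^p
   and f 1_{|f| > lam} is in L^q as soon as the modular of f / lam is finite. *)

(* lebesgue_d is not known to be a measure, so the library's lemmas on
   integrals do not apply to it; for nonnegative integrands the few that are
   needed only use that mu is nonnegative and finitely subadditive. *)
Section subadditive_integral.
Local Open Scope ereal_scope.
Context {dT} {T : measurableType dT} {R : realType} {mu : set T -> \bar R}.
Hypothesis mu0 : mu set0 = 0.
Hypothesis mu_ge0 : forall A, 0 <= mu A.
Hypothesis mu_subadd : forall A B, mu (A `|` B) <= mu A + mu B.
Implicit Types F G : T -> R.
Import HBNNSimple.

Let nnintegral (F : T -> R) := ereal_sup [set sintegral mu h | h in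
  [set h : {nnsfun T >-> R} | forall x, (h x)%:E <= (F x)%:E]].

Let sintegral_term_ge0 (h : {nnsfun T >-> R}) x :
  0 <= x%:E * mu (h @^-1` [set x]).
Proof.
have [x0|x0] := ltP x 0%R; last by rewrite mule_ge0.
by rewrite preimage_nnfun0// mu0 mule0.
Qed.

Let sintegral0 : sintegral mu (cst 0%R) = 0.
Proof.
rewrite /sintegral fsbig1// => r _; rewrite preimage_cst.
by case: ifPn => [/[!inE] <-|]; rewrite ?mul0e// mu0 mule0.
Qed.

Let nnintegral0 : nnintegral (cst 0%R) = 0.
Proof.
apply/eqP; rewrite eq_le; apply/andP; split; last first.
  by apply/ereal_sup_ubound; exists nnsfun0; [|exact: sintegral0].
apply/ge_ereal_sup => _ [h /= h0 <-].
have {}h0 x : h x = 0%R by apply/eqP; rewrite eq_le -2!lee_fin h0//= lee_fin.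
by rewrite (eq_sintegral (@nnsfun0 _ T R)) ?sintegral0.
Qed.

Let integralE_nnintegral F : (forall x, 0 <= F x)%R ->
  \int[mu]_x (F x)%:E = nnintegral F.
Proof.
move=> F0; rewrite /integral patch_setT.
have -> : (fun x => (F x)%:E) ^\+ = (fun x => (F x)%:E).
  by apply/funext => x; rewrite funeposE /= max_l // lee_fin.
have -> : (fun x => (F x)%:E) ^\- = (fun x => (cst 0%R x)%:E).
  by apply/funext => x; rewrite funenegE /= max_r // lee_fin oppr_le0.
by rewrite -[X in _ - X]/(nnintegral (cst 0%R)) nnintegral0 sube0.
Qed.

Lemma subadd_integral_ge0 {F} : (forall x, 0 <= F x)%R ->
  0 <= \int[mu]_x (F x)%:E.
Proof.
move=> F0; rewrite integralE_nnintegral//; apply: ereal_sup_ubound.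
by exists nnsfun0; [move=> x /=; rewrite lee_fin | exact: sintegral0].
Qed.

Lemma subadd_le_integral {F G} : (forall x, 0 <= F x)%R ->
  (forall x, F x <= G x)%R -> \int[mu]_x (F x)%:E <= \int[mu]_x (G x)%:E.
Proof.
move=> F0 FG; have G0 x : (0 <= G x)%R by exact: le_trans (FG x).
rewrite !integralE_nnintegral//; apply: ge_ereal_sup => _ [h hF <-].
by apply: ereal_sup_ubound; exists h => // x; rewrite (le_trans (hF x)) ?lee_fin.
Qed.

Let sintegralZl (r : R) (h : {nnsfun T >-> R}) : (0 < r)%R ->
  sintegral mu (cst r \* h)%R = r%:E * sintegral mu h.
Proof.
move=> r0; rewrite /sintegral ge0_mule_fsumr; last exact: sintegral_term_ge0.
rewrite (reindex_fsbigT ( *%R r))/=; last first.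
  by exists ( *%R r^-1) => y /=; rewrite ?mulKf ?mulVKf ?gt_eqF.
apply: eq_fsbigr => x; rewrite preimage_cstM ?gt_eqF//.
by rewrite [(_ / r)%R]mulrC mulKf ?gt_eqF// EFinM muleA.
Qed.

Lemma subadd_integralZl_le {r : R} {F} : (0 < r)%R -> (forall x, 0 <= F x)%R ->
  \int[mu]_x (r * F x)%:E <= r%:E * \int[mu]_x (F x)%:E.
Proof.
move=> r0 F0; have rF0 x : (0 <= r * F x)%R by exact: mulr_ge0 (ltW r0) (F0 x).
rewrite !integralE_nnintegral//; apply: ge_ereal_sup => _ [h hF <-].
have ri0 : (0 <= r^-1)%R by rewrite invr_ge0 ltW.
pose h' := scale_nnsfun h ri0.
have -> : sintegral mu h = sintegral mu (cst r \* h')%R.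
  by apply: eq_sintegral => x /=; rewrite mulrA mulfV ?gt_eqF// mul1r.
rewrite sintegralZl//; apply: lee_wpmul2l; first by rewrite lee_fin ltW.
apply: ereal_sup_ubound; exists h' => //= x.
by rewrite lee_fin -(ler_pM2l r0) mulrA mulfV ?gt_eqF// mul1r -lee_fin.
Qed.

Let sintegral_widen (h : {nnsfun T >-> R}) S : range h `<=` S ->
  sintegral mu h = \sum_(x \in S) x%:E * mu (h @^-1` [set x]).
Proof.
move=> hS; apply/esym/fsbig_widen => // x [_ nS] /=.
by rewrite preimage10 ?mu0 ?mule0// => /hS.
Qed.

Let preimage_proj_nnsfun (h : {nnsfun T >-> R}) A (mA : measurable A) x :
  x != 0%R -> proj_nnsfun h mA @^-1` [set x] = h @^-1` [set x] `&` A.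
Proof.
move=> x0; apply/seteqP; split => y /=; rewrite measurable_realfun.mindicE;
  case: (boolP (y \in A)) => yA /=; rewrite ?mulr1 ?mulr0.
- by move=> ->; split => //; rewrite -inE.
- by move=> y0; rewrite y0 eqxx in x0.
- by case.
- by case=> _; rewrite -inE (negbTE yA).
Qed.

Let sintegral_proj_split (h : {nnsfun T >-> R}) A (mA : measurable A) :
  sintegral mu h <=
  sintegral mu (proj_nnsfun h mA) + sintegral mu (proj_nnsfun h (measurableC mA)).
Proof.
pose S := range h `|` [set 0%R].
have Sfin : finite_set S by rewrite finite_setU; split => //; exact: fimfunP.
have rangeS B (mB : measurable B) : range (proj_nnsfun h mB) `<=` S.
  move=> _ [y _ <-] /=; rewrite measurable_realfun.mindicE.
  by case: (y \in B); rewrite ?mulr1 ?mulr0; [left; exists y|right].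
rewrite (@sintegral_widen h S); last by move=> y hy; left.
rewrite (sintegral_widen _ _ (rangeS _ mA)).
rewrite (sintegral_widen _ _ (rangeS _ (measurableC mA))) -fsbig_split//.
apply: lee_fsum => // x _ /=.
have [->|x0] := eqVneq x 0%R; first by rewrite !mul0e adde0.
rewrite !preimage_proj_nnsfun//.
have [xlt0|xge0] := ltP x 0%R.
  by rewrite preimage_nnfun0// !set0I mu0 !mule0 adde0.
rewrite -ge0_muleDr// lee_wpmul2l ?lee_fin//.
by rewrite (le_trans _ (mu_subadd _ _))// -setIUr setUv setIT.
Qed.

Let sintegral_proj_le (h : {nnsfun T >-> R}) B (mB : measurable B) F G :
  (forall x, 0 <= G x)%R -> (forall x, (h x)%:E <= (F x)%:E) ->
  (forall x, B x -> F x <= G x)%R -> sintegral mu (proj_nnsfun h mB) <= nnintegral G.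
Proof.
move=> G0 hF FG; apply: ereal_sup_ubound; exists (proj_nnsfun h mB) => //= x.
rewrite measurable_realfun.mindicE.
have [xB|_] := boolP (x \in B); rewrite ?mulr1 ?mulr0 lee_fin//.
by rewrite -lee_fin (le_trans (hF x))// lee_fin FG// -inE.
Qed.

Lemma subadd_integral_split_le {A} {F G1 G2 : T -> R} : measurable A ->
  (forall x, 0 <= F x)%R -> (forall x, 0 <= G1 x)%R -> (forall x, 0 <= G2 x)%R ->
  (forall x, A x -> F x <= G1 x)%R -> (forall x, ~ A x -> F x <= G2 x)%R ->
  \int[mu]_x (F x)%:E <= \int[mu]_x (G1 x)%:E + \int[mu]_x (G2 x)%:E.
Proof.
move=> mA F0 G10 G20 FG1 FG2; rewrite !integralE_nnintegral//.
apply: ge_ereal_sup => _ [h hF <-].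
apply: le_trans (sintegral_proj_split h _ mA) (leeD _ _).
  exact: sintegral_proj_le G10 hF FG1.
exact: sintegral_proj_le G20 hF FG2.
Qed.

End subadditive_integral.

Lemma nneseries_interleave_le {R : realType} (u v : nat -> \bar R) :
  (forall k, 0 <= u k)%E -> (forall k, 0 <= v k)%E ->
  (\sum_(k <oo) (if odd k then v k./2 else u k./2) <=
   \sum_(k <oo) u k + \sum_(k <oo) v k)%E.
Proof.
move=> u0 v0; set w := fun k => if odd k then v k./2 else u k./2.
have w0 k : (0 <= w k)%E by rewrite /w; case: odd.
have sum_double n : (\sum_(0 <= k < n.*2) w k =
    \sum_(0 <= k < n) u k + \sum_(0 <= k < n) v k)%E.
  elim: n => [|n IH]; first by rewrite !big_geq// adde0.
  rewrite doubleS !big_nat_recr//= IH /w /= odd_double doubleK uphalf_double.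
  by rewrite -!addeA; congr (_ + _)%E; rewrite addeCA.
apply: lime_le; first exact: is_cvg_nneseries (fun k _ _ => w0 k).
apply: nearW => n; apply: (@le_trans _ _ (\sum_(0 <= k < n.*2) w k)%E).
  rewrite -addnn [leRHS](@big_cat_nat _ _ _ n) ?leq_addr//=.
  by apply: leeDl; exact: sume_ge0.
by rewrite sum_double leeD// nneseries_lim_ge.
Qed.

Section lebesgue_d.
Local Open Scope ereal_scope.
Context (R : realType) (d : nat).
Implicit Types A B : set (d.-tuple R).

Let cover_vol (ab : nat -> d.-tuple R * d.-tuple R) :=
  \sum_(k <oo) (box_vol (ab k).1 (ab k).2)%:E.

Lemma box_vol_ge0 (a b : d.-tuple R) : (0 <= box_vol a b)%R.
Proof. by apply: prodr_ge0 => i _; rewrite le_max lexx orbT. Qed.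

Let cover_vol_ge0 ab : 0 <= cover_vol ab.
Proof. by apply: nneseries_ge0 => k _ _; rewrite lee_fin box_vol_ge0. Qed.

Let lebesgue_d_le_cover_vol A ab :
  A `<=` \bigcup_k box (ab k).1 (ab k).2 -> lebesgue_d A <= cover_vol ab.
Proof. by move=> Aab; apply: ereal_inf_lbound; exists ab. Qed.

Let lebesgue_d_cover_lt A x : lebesgue_d A < x ->
  exists2 ab, A `<=` \bigcup_k box (ab k).1 (ab k).2 & cover_vol ab < x.
Proof. by move=> /ereal_inf_lt[_ [ab Aab <-] abx]; exists ab. Qed.

Lemma lebesgue_d_ge0 A : 0 <= lebesgue_d A.
Proof. by apply: le_ereal_inf_tmp => _ [ab _ <-]; exact: cover_vol_ge0. Qed.

(* For d = 0 every box is the whole space with volume 1, and lebesgue_d set0 = +oo. *)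
Lemma lebesgue_d0 : (0 < d)%N -> @lebesgue_d R d set0 = 0.
Proof.
move=> d_gt0; apply/eqP; rewrite eq_le lebesgue_d_ge0 andbT.
pose t : d.-tuple R := [tuple 0%R | i < d].
apply: le_trans (lebesgue_d_le_cover_vol set0 (fun=> (t, t)) _) _ => //.
rewrite [leLHS]eseries0// => k _ _ /=.
by rewrite /box_vol; case: d d_gt0 t => // n _ t; rewrite big_ord_recl subrr maxxx mul0r.
Qed.

Lemma lebesgue_dU2 A B : lebesgue_d (A `|` B) <= lebesgue_d A + lebesgue_d B.
Proof.
case EA: (lebesgue_d A) (lebesgue_d_ge0 A) => [a| |] // _;
  case EB: (lebesgue_d B) (lebesgue_d_ge0 B) => [b| |] // _;
  rewrite ?addey ?addye ?leey//.
apply/lee_addgt0Pr => e e0; have e20 : (0 < e / 2)%R by rewrite divr_gt0.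
have [ab1 Aab1 ab1a] : exists2 ab, A `<=` \bigcup_k box (ab k).1 (ab k).2 &
    cover_vol ab < (a + e / 2)%:E.
  by apply: lebesgue_d_cover_lt; rewrite EA lte_fin ltrDl.
have [ab2 Bab2 ab2b] : exists2 ab, B `<=` \bigcup_k box (ab k).1 (ab k).2 &
    cover_vol ab < (b + e / 2)%:E.
  by apply: lebesgue_d_cover_lt; rewrite EB lte_fin ltrDl.
pose ab k := if odd k then ab2 k./2 else ab1 k./2.
have ABab : A `|` B `<=` \bigcup_k box (ab k).1 (ab k).2.
  move=> x [/Aab1 [k _ xk]|/Bab2 [k _ xk]].
    by exists k.*2 => //; rewrite /ab odd_double doubleK.
  by exists k.*2.+1 => //; rewrite /ab /= odd_double /= uphalf_double.
apply: le_trans (lebesgue_d_le_cover_vol _ _ ABab) _.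
have vol_ge0 (ab' : nat -> d.-tuple R * d.-tuple R) k :
    0 <= (box_vol (ab' k).1 (ab' k).2)%:E.
  by rewrite lee_fin box_vol_ge0.
have -> : cover_vol ab = \sum_(k <oo) (if odd k
    then (box_vol (ab2 k./2).1 (ab2 k./2).2)%:E
    else (box_vol (ab1 k./2).1 (ab1 k./2).2)%:E).
  by apply: eq_eseriesr => k _; rewrite /ab; case: odd.
apply: le_trans (nneseries_interleave_le _ _ (vol_ge0 ab1) (vol_ge0 ab2)) _.
apply: le_trans (leeD (ltW ab1a) (ltW ab2b)) _.
by rewrite -EFinD lee_fin addrACA -splitr addrC.
Qed.

End lebesgue_d.

Lemma ex_ge1_near_pinfty {R : realType} {P : R -> Prop} :
  (\forall t \near +oo, P t) -> exists2 M, 1 <= M & forall t, M < t -> P t.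
Proof.
move=> [M [_ HM]]; exists (Num.max M 1); first by rewrite le_max lexx orbT.
by move=> t; rewrite gt_max => /andP[/HM].
Qed.

Lemma ex_le1_near_0right {R : realType} {P : R -> Prop} :
  (\forall t \near 0^'+, P t) ->
  exists2 e, 0 < e <= 1 & forall t, 0 < t -> t < e -> P t.
Proof.
move=> /nbhs_ballP[e /= e0 He]; exists (Num.min e 1).
  by rewrite lt_min e0 ltr01 ge_min lexx orbT.
move=> t t0; rewrite lt_min => /andP[te _].
by apply: He; rewrite ?gt_eqF// /ball /= sub0r normrN gtr0_norm.
Qed.

Section young_function.
Context {R : realType} {Phi : R -> R}.
Hypothesis Phi_young : young_function Phi.

Lemma young0 : Phi 0 = 0. Proof. by case: Phi_young. Qed.

Lemma young_gt0 {t} : 0 < t -> 0 < Phi t.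
Proof. by case: Phi_young => _ _ + _; apply. Qed.

Lemma young_ge0 {t} : 0 <= t -> 0 <= Phi t.
Proof. by rewrite le_eqVlt => /predU1P[<-|/young_gt0/ltW//]; rewrite young0. Qed.

(* Convexity with Phi 0 = 0 gives Phi x <= (x / y) Phi y. *)
Lemma young_le {x y} : 0 <= x -> x <= y -> Phi x <= Phi y.
Proof.
move=> x0 xy; have [y0|y_neq0] := eqVneq y 0.
  by have -> : x = y by apply/le_anti; rewrite xy y0 x0.
have y0 : 0 < y by rewrite lt_neqAle eq_sym y_neq0 (le_trans x0 xy).
have xy1 : x / y <= 1 by rewrite ler_pdivrMr // mul1r.
case: Phi_young => convex _ _ _.
have := convex 0 y (x / y) (lexx _) (ltW y0) (divr_ge0 x0 (ltW y0)) xy1.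
rewrite mulr0 add0r divfK ?gt_eqF// young0 mulr0 add0r => /le_trans; apply.
by rewrite ler_piMl// young_ge0// (ltW y0).
Qed.

Lemma young_powRE t : 0 < t -> t != 1 -> Phi t = Phi 1 * t `^ r_fun Phi t.
Proof.
move=> t0 t1; have lnt_neq0 : ln t != 0 by rewrite ln_eq0.
rewrite /powR gt_eqF// /r_fun divfK// lnK ?posrE ?divr_gt0 ?young_gt0//.
by rewrite mulrC divfK// gt_eqF// young_gt0.
Qed.

Lemma young_le_powR {t s} : 1 < t -> r_fun Phi t <= s -> Phi t <= Phi 1 * t `^ s.
Proof.
move=> t1 rs; have t0 : 0 < t by apply: lt_trans t1.
by rewrite young_powRE ?gt_eqF// ler_pM2l ?young_gt0// ler_powR// (ltW t1).
Qed.

Lemma powR_le_young {t s} : 1 < t -> s <= r_fun Phi t -> Phi 1 * t `^ s <= Phi t.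
Proof.
move=> t1 sr; have t0 : 0 < t by apply: lt_trans t1.
by rewrite [leRHS]young_powRE ?gt_eqF// ler_pM2l ?young_gt0// ler_powR// (ltW t1).
Qed.

Lemma young_le_powR_lt1 {t s} : 0 < t < 1 -> s <= r_fun Phi t ->
  Phi t <= Phi 1 * t `^ s.
Proof.
move=> /andP[t0 t1] sr.
by rewrite young_powRE ?lt_eqF// ler_pM2l ?young_gt0// ger_powR// t0 (ltW t1).
Qed.

Lemma powR_le_young_lt1 {t s} : 0 < t < 1 -> r_fun Phi t <= s ->
  Phi 1 * t `^ s <= Phi t.
Proof.
move=> /andP[t0 t1] rs.
by rewrite [leRHS]young_powRE ?lt_eqF// ler_pM2l ?young_gt0// ger_powR// t0 (ltW t1).
Qed.

End young_function.

Section young_function_bounds.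
Context {R : realType} {Phi : R -> R} {r0 rinf : R}.
Hypothesis Phi_young : young_function Phi.
Hypothesis r_fun_0 : r_fun Phi t @[t --> 0^'+] --> r0.
Hypothesis r_fun_pinfty : r_fun Phi t @[t --> +oo] --> rinf.

Let Phi1_gt0 : 0 < Phi 1 := young_gt0 Phi_young ltr01.

Lemma young_le_powR_ge1 {p} : rinf < p -> 0 <= p ->
  exists2 K, 0 < K & forall t, 1 <= t -> Phi t <= K * t `^ p.
Proof.
move=> rinf_p p0.
have [M M1 HM] := ex_ge1_near_pinfty (cvgr_lt _ r_fun_pinfty _ rinf_p).
have PhiM : Phi 1 <= Phi M := young_le Phi_young ler01 M1.
exists (Phi M); first exact: lt_le_trans PhiM.
move=> t t1; have [tM|Mt] := leP t M.
  apply: le_trans (young_le Phi_young (le_trans ler01 t1) tM) _.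
  apply: ler_peMr; first exact: le_trans (ltW Phi1_gt0) PhiM.
  by rewrite -(powRr0 t) ler_powR.
apply: le_trans (young_le_powR Phi_young (le_lt_trans M1 Mt) (ltW (HM _ Mt))) _.
by rewrite ler_wpM2r ?powR_ge0.
Qed.

Lemma young_le_powR_le1 {q} : q < r0 -> 0 <= q ->
  exists2 K, 0 < K & forall t, 0 <= t -> t <= 1 -> Phi t <= K * t `^ q.
Proof.
move=> q_r0 q0.
have [e /andP[e0 e1] He] := ex_le1_near_0right (cvgr_gt _ r_fun_0 _ q_r0).
have eq_gt0 : 0 < e `^ q by rewrite powR_gt0.
have eq_le1 : e `^ q <= 1 by rewrite -(powRr0 e) ger_powR// e0.
have K0 : 0 < Phi 1 / e `^ q by rewrite divr_gt0.
exists (Phi 1 / e `^ q) => // t t0 t1; have [te|et] := ltP t e; last first.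
  apply: le_trans (young_le Phi_young t0 t1) _.
  rewrite mulrAC ler_pdivlMr// ler_pM2l//.
  by apply: ge0_ler_powR => //; rewrite nnegrE (ltW e0).
have [->|t_neq0] := eqVneq t 0.
  by rewrite (young0 Phi_young) mulr_ge0 ?powR_ge0 ?(ltW K0).
have t_gt0 : 0 < t by rewrite lt_neqAle eq_sym t_neq0.
have t_01 : 0 < t < 1 by rewrite t_gt0 (lt_le_trans te e1).
apply: le_trans (young_le_powR_lt1 Phi_young t_01 (ltW (He _ t_gt0 te))) _.
by rewrite ler_wpM2r ?powR_ge0// ler_pdivlMr// ler_piMr ?(ltW Phi1_gt0).
Qed.

Lemma powR_le_young_le1 {p} : r0 < p -> 0 < p ->
  exists2 c, 0 < c & forall t, 0 <= t -> t <= 1 -> t `^ p <= c * Phi t.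
Proof.
move=> r0_p p0.
have [e /andP[e0 e1] He] := ex_le1_near_0right (cvgr_lt _ r_fun_0 _ r0_p).
have Phie_gt0 : 0 < Phi e := young_gt0 Phi_young e0.
have Phie_le_Phi1 : Phi e <= Phi 1 := young_le Phi_young (ltW e0) e1.
exists (Phi e)^-1; first by rewrite invr_gt0.
move=> t t0 t1; have [te|et] := ltP t e; last first.
  have tp_le1 : t `^ p <= 1.
    by rewrite -(powRr0 t) ger_powR ?(lt_le_trans e0 et) ?t1 ?(ltW p0).
  apply: le_trans tp_le1 _.
  by rewrite ler_pdivlMl// mulr1 young_le// (ltW e0).
have [->|t_neq0] := eqVneq t 0.
  by rewrite powR0 ?gt_eqF// (young0 Phi_young) mulr0.
have t_gt0 : 0 < t by rewrite lt_neqAle eq_sym t_neq0.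
have t_01 : 0 < t < 1 by rewrite t_gt0 (lt_le_trans te e1).
rewrite ler_pdivlMl//; apply: le_trans (ler_wpM2r (powR_ge0 _ _) Phie_le_Phi1) _.
by apply: (powR_le_young_lt1 Phi_young t_01); exact: ltW (He _ t_gt0 te).
Qed.

Lemma powR_le_young_ge1 {q} : q < rinf -> 0 <= q ->
  exists2 c, 0 < c & forall t, 1 <= t -> t `^ q <= c * Phi t.
Proof.
move=> q_rinf q0.
have [M M1 HM] := ex_ge1_near_pinfty (cvgr_gt _ r_fun_pinfty _ q_rinf).
have Mq_ge1 : 1 <= M `^ q by rewrite -(powRr0 M) ler_powR.
exists (M `^ q / Phi 1); first by rewrite divr_gt0// (lt_le_trans ltr01).
move=> t t1; have t0 : 0 <= t := le_trans ler01 t1.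
rewrite mulrAC ler_pdivlMr//; have [tM|Mt] := leP t M.
  have tq_le_Mq : t `^ q <= M `^ q.
    by apply: ge0_ler_powR => //; rewrite nnegrE (le_trans t0).
  apply: le_trans (ler_wpM2r (ltW Phi1_gt0) tq_le_Mq) _.
  by rewrite ler_wpM2l ?powR_ge0// young_le.
have := powR_le_young Phi_young (le_lt_trans M1 Mt) (ltW (HM _ Mt)).
by rewrite mulrC => /le_trans; apply; rewrite ler_peMl// young_ge0.
Qed.

End young_function_bounds.

Lemma powRV (R : realType) (a r : R) : 0 <= a -> a^-1 `^ r = (a `^ r)^-1.
Proof. by move=> a0; rewrite -powR_inv1// -powRrM mulN1r powRN. Qed.

Definition powR_integrable {dT} {T : measurableType dT} {R : realType}
    (mu : set T -> \bar R) (p : R) (f : T -> R) :=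
  measurable_fun setT f /\ (\int[mu]_x (`|f x| `^ p)%:E < +oo)%E.

Section orlicz_embedding.
Context {dT} {T : measurableType dT} {R : realType} {mu : set T -> \bar R}.
Hypothesis mu0 : mu set0 = 0%E.
Hypothesis mu_ge0 : forall A, (0 <= mu A)%E.
Hypothesis mu_subadd : forall A B, (mu (A `|` B) <= mu A + mu B)%E.
Context {Phi : R -> R}.
Hypothesis Phi_young : young_function Phi.

Let normr_div (f : T -> R) lam x : 0 < lam -> `|f x / lam| = `|f x| / lam.
Proof. by move=> lam0; rewrite normrM normfV (gtr0_norm lam0). Qed.

Let measurable_normr_le (f : T -> R) (lam : R) : measurable_fun setT f ->
  measurable [set x | `|f x| <= lam].
Proof.
move=> mf; rewrite -[X in measurable X]setTI; apply: measurable_fun_le => //.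
by apply: measurableT_comp =>//; exact: measurable_realfun.normr_measurable.
Qed.

Lemma modular_le_powR_integrals {f : T -> R} {p q Kp Kq lam : R} :
  measurable_fun setT f -> q <= p -> 0 < Kp -> 0 < Kq -> 1 <= lam ->
  (forall t, 1 <= t -> Phi t <= Kp * t `^ p) ->
  (forall t, 0 <= t -> t <= 1 -> Phi t <= Kq * t `^ q) ->
  (\int[mu]_x (Phi `|f x / lam|)%:E <=
   (Kp / lam `^ q)%:E * \int[mu]_x (`|f x| `^ p)%:E +
   (Kq / lam `^ q)%:E * \int[mu]_x (`|f x| `^ q)%:E)%E.
Proof.
move=> mf qp Kp0 Kq0 lam1 HKp HKq; have lam0 : 0 < lam := lt_le_trans ltr01 lam1.
have lamq0 : 0 < lam `^ q by rewrite powR_gt0.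
have ratio_powR s x : (`|f x| / lam) `^ s = `|f x| `^ s / lam `^ s.
  by rewrite powRM ?invr_ge0 ?(ltW lam0)// powRV// (ltW lam0).
have ratio_ge0 x : 0 <= `|f x| / lam by rewrite divr_ge0 ?(ltW lam0).
have Phi_le_q x : `|f x| <= lam -> Phi `|f x / lam| <= Kq / lam `^ q * `|f x| `^ q.
  move=> fx; rewrite normr_div// mulrAC -mulrA -ratio_powR HKq//.
  by rewrite ler_pdivrMr// mul1r.
have Phi_le_p x : ~ `|f x| <= lam -> Phi `|f x / lam| <= Kp / lam `^ q * `|f x| `^ p.
  move=> /negP; rewrite -ltNge => fx; rewrite normr_div//.
  apply: le_trans (HKp _ _) _; first by rewrite ler_pdivlMr// mul1r (ltW fx).
  rewrite ratio_powR mulrAC mulrA ler_wpM2l ?mulr_ge0 ?powR_ge0 ?(ltW Kp0)//.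
  by rewrite lef_pV2 ?posrE ?powR_gt0// ler_powR.
have G_ge0 K s x : 0 < K -> 0 <= K / lam `^ q * `|f x| `^ s.
  by move=> K0; rewrite mulr_ge0 ?powR_ge0 ?divr_ge0 ?powR_ge0 ?(ltW K0).
have integralZ K s : 0 < K -> (\int[mu]_x (K / lam `^ q * `|f x| `^ s)%:E <=
    (K / lam `^ q)%:E * \int[mu]_x (`|f x| `^ s)%:E)%E.
  move=> K0; exact: (subadd_integralZl_le mu0 mu_ge0 (divr_gt0 K0 lamq0)
    (fun x => powR_ge0 `|f x| s)).
rewrite addeC; apply: le_trans (subadd_integral_split_le mu0 mu_ge0 mu_subadd
  (measurable_normr_le _ lam mf) (fun x => young_ge0 Phi_young (normr_ge0 _))
  (G_ge0 _ _ ^~ Kq0) (G_ge0 _ _ ^~ Kp0) Phi_le_q Phi_le_p) _.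
by apply: leeD; [exact: integralZ Kq0 | exact: integralZ Kp0].
Qed.

Let integral_powR_finite (f : T -> R) s : (\int[mu]_x (`|f x| `^ s)%:E < +oo)%E ->
  exists2 I : R, 0 <= I & (\int[mu]_x (`|f x| `^ s)%:E = I%:E)%E.
Proof.
have : (0 <= \int[mu]_x (`|f x| `^ s)%:E)%E.
  by apply: (subadd_integral_ge0 mu0) => x; exact: powR_ge0.
by case: (\int[mu]_x _)%E => // I I0 _; exists I; rewrite -?lee_fin.
Qed.

Lemma powR_integrable_modular_le1 {f : T -> R} {p q Kp Kq : R} :
  1 <= q -> q <= p -> 0 < Kp -> 0 < Kq ->
  (forall t, 1 <= t -> Phi t <= Kp * t `^ p) ->
  (forall t, 0 <= t -> t <= 1 -> Phi t <= Kq * t `^ q) ->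
  powR_integrable mu p f -> powR_integrable mu q f ->
  exists2 lam, 0 < lam & (\int[mu]_x (Phi `|f x / lam|)%:E <= 1)%E.
Proof.
move=> q1 qp Kp0 Kq0 HKp HKq [mf /integral_powR_finite[Ip Ip0 IpE]].
move=> [_ /integral_powR_finite[Iq Iq0 IqE]].
pose lam := 1 + (Kp * Ip + Kq * Iq).
have lam1 : 1 <= lam by rewrite lerDl addr_ge0 ?mulr_ge0 ?(ltW Kp0) ?(ltW Kq0).
have lam0 : 0 < lam := lt_le_trans ltr01 lam1.
exists lam => //.
apply: le_trans (modular_le_powR_integrals mf qp Kp0 Kq0 lam1 HKp HKq) _.
rewrite IpE IqE -!EFinM -EFinD lee_fin mulrAC [X in _ + X]mulrAC -mulrDl.
rewrite ler_pdivrMr ?powR_gt0// mul1r (le_trans _ (le1r_powR lam1 q1))//.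
by rewrite lerDr.
Qed.

Lemma modular_powR_integrable_restrict (f : T -> R) (D : set T) (s C lam : R) :
  measurable_fun setT f -> measurable D -> 0 < s -> 0 < C ->
  (\int[mu]_x (Phi `|f x / lam|)%:E < +oo)%E ->
  (forall x, D x -> `|f x| `^ s <= C * Phi `|f x / lam|) ->
  powR_integrable mu s (fun x => f x * \1_D x).
Proof.
move=> mf mD s0 C0 modf HD; split.
  by apply: measurable_realfun.measurable_funM.
have Phi_ge0 x : 0 <= Phi `|f x / lam| by rewrite young_ge0.
have restrict_le x : `|f x * \1_D x| `^ s <= C * Phi `|f x / lam|.
  rewrite indicE; have [xD|xD] := boolP (x \in D); first by rewrite mulr1 HD// -inE.
  by rewrite mulr0 normr0 powR0 ?gt_eqF// mulr_ge0 ?(ltW C0).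
apply: le_lt_trans (subadd_le_integral mu0 (fun x => powR_ge0 _ _) restrict_le) _.
apply: le_lt_trans (subadd_integralZl_le mu0 mu_ge0 C0 Phi_ge0) _.
by rewrite lte_mul_pinfty ?lee_fin ?(ltW C0).
Qed.

Lemma modular_powR_integrable_sum {f : T -> R} {p q cp cq lam : R} :
  measurable_fun setT f -> 0 < p -> 0 < q -> 0 < cp -> 0 < cq -> 0 < lam ->
  (forall t, 0 <= t -> t <= 1 -> t `^ p <= cp * Phi t) ->
  (forall t, 1 <= t -> t `^ q <= cq * Phi t) ->
  (\int[mu]_x (Phi `|f x / lam|)%:E < +oo)%E ->
  fun_sum_set (powR_integrable mu p) (powR_integrable mu q) f.
Proof.
move=> mf p0 q0 cp0 cq0 lam0 Hp Hq modf.
pose B := [set x | `|f x| <= lam].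
have mB : measurable B := measurable_normr_le _ _ mf.
have ratio_ge0 x : 0 <= `|f x| / lam by rewrite divr_ge0 ?(ltW lam0).
have rescale s c x : (`|f x| / lam) `^ s <= c * Phi (`|f x| / lam) ->
    `|f x| `^ s <= lam `^ s * c * Phi `|f x / lam|.
  move=> ratio_le; rewrite normr_div// -mulrA.
  have -> : `|f x| `^ s = lam `^ s * (`|f x| / lam) `^ s.
    by rewrite -powRM ?(ltW lam0)// mulrC divfK ?gt_eqF.
  by rewrite ler_wpM2l ?powR_ge0.
exists (fun x => f x * \1_B x), (fun x => f x * \1_(~` B) x); split; [|split].
- apply: (modular_powR_integrable_restrict f B p (lam `^ p * cp) lam mf mB p0 _ modf).
    by rewrite mulr_gt0 ?powR_gt0.
  by move=> x Bx; apply: rescale; apply: Hp; rewrite ?ler_pdivrMr ?mul1r.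
- apply: (modular_powR_integrable_restrict f (~` B) q (lam `^ q * cq) lam mf
    (measurableC mB) q0 _ modf).
    by rewrite mulr_gt0 ?powR_gt0.
  move=> x /negP; rewrite -ltNge => fx; apply: rescale; apply: Hq.
  by rewrite ler_pdivlMr// mul1r (ltW fx).
- apply/funext => x; rewrite !indicE in_setC.
  by case: (x \in B); rewrite ?mulr1 ?mulr0 ?addr0 ?add0r.
Qed.

End orlicz_embedding.

Lemma LpE (R : realType) (d : nat) (p : R) :
  @Lp R d p = powR_integrable (@lebesgue_d R d) p.
Proof. by []. Qed.

Theorem mainTheorem16 (R : realType) (d : nat) (Phi : R -> R) (r0 rinf : R) :
  (1 <= d)%N ->
  young_function Phi ->
  (p_exp Phi < +oo)%E ->
  r_fun Phi t @[t --> 0^'+] --> r0 ->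
  r_fun Phi t @[t --> +oo] --> rinf ->
  1 < r0 -> 1 < rinf ->
  forall p q : R, Num.max r0 rinf < p -> 1 < q -> q < Num.min r0 rinf ->
    @Lp R d p `&` @Lp R d q `<=` @Orlicz R d Phi /\
    @Orlicz R d Phi `<=` fun_sum_set (@Lp R d p) (@Lp R d q).
Proof.
move=> d_gt0 Phi_young _ r_fun_0 r_fun_pinfty _ _ p q rp q1 qr.
have [r0_p rinf_p] : r0 < p /\ rinf < p by move: rp; rewrite gt_max => /andP[].
have [q_r0 q_rinf] : q < r0 /\ q < rinf by move: qr; rewrite lt_min => /andP[].
have q0 : 0 < q := lt_trans ltr01 q1.
have qp : q <= p := ltW (lt_trans q_r0 r0_p).
have p0 : 0 < p := lt_le_trans q0 qp.
have mu0 := lebesgue_d0 R d d_gt0.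
have mu_ge0 := @lebesgue_d_ge0 R d.
have mu_subadd := @lebesgue_dU2 R d.
split.
- move=> f [fp fq]; split; first by case: fp.
  have [Kp Kp0 HKp] := young_le_powR_ge1 Phi_young r_fun_pinfty rinf_p (ltW p0).
  have [Kq Kq0 HKq] := young_le_powR_le1 Phi_young r_fun_0 q_r0 (ltW q0).
  have [lam lam0 modf] := powR_integrable_modular_le1 mu0 mu_ge0 mu_subadd Phi_young
    (ltW q1) qp Kp0 Kq0 HKp HKq fp fq.
  by apply: le_lt_trans (ltry lam); apply: ereal_inf_lbound; exists lam.
- rewrite !LpE => f [mf /ereal_inf_lt[_ [lam [lam0 modf] <-] _]].
  have [cp cp0 Hcp] := powR_le_young_le1 Phi_young r_fun_0 r0_p p0.
  have [cq cq0 Hcq] := powR_le_young_ge1 Phi_young r_fun_pinfty q_rinf (ltW q0).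
  apply: (modular_powR_integrable_sum mu0 mu_ge0 Phi_young mf p0 q0 cp0 cq0 lam0
    Hcp Hcq).
  exact: le_lt_trans modf (ltry 1).
Qed.
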